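(* Let $p$ be a prime, $n=n_1n_2$, $d$ a divisor of $n$ with $1<d<n$, $Q=p^n$, $m\ge0$ an integer and $N=n_1(m+1)$. Let $h\in\mathbb{Z}[y]$ be monic of degree $n_1$, and let $f\in\mathbb{Z}[y][x]$ be monic in $x$ of degree $\deg_x f$, with $\deg_y f\le n_1-1$. Then there is a constant $K>0$ depending only on $n_1$, $m$, $\deg_x f$ and $\|h\|_\infty$ such that every $P\in\mathbb{Z}[x,y]$ with $\deg_xP\le m$, $\deg_yP\le n_1-1$ and $\|P\|_\infty\le 2^{(N-1)/4}p^{(n-d)/N}$ satisfies $$\bigl|\mathrm{Res}_y\bigl(\mathrm{Res}_x(P,f),h\bigr)\bigr|\le K\,Q^{(1-\frac dn)\frac{\deg_x f}{m+1}}\,\|f\|_\infty^{\,n_1 m}.$$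
   Context: $\mathrm{Res}_x$ (resp. $\mathrm{Res}_y$) denotes the resultant with respect to the variable $x$ (resp. $y$); the quantity $\mathrm{Res}_y(\mathrm{Res}_x(P,f),h)$ is called the pseudonorm of $P$. For a polynomial with integer coefficients (in one or several variables), $\|\cdot\|_\infty$ is the maximum absolute value of its coefficients. *)

From HB Require Import structures.
From Stdlib Require Import Reals.
From mathcomp Require Import all_boot all_order all_algebra.

Set Implicit Arguments.
Unset Strict Implicit.
Unset Printing Implicit Defensive.

Import GRing.Theory Num.Theory.

(* Bivariate integer polynomials: Z[y][x] = {poly {poly int}};
   the outer variable is x, the inner (coefficient) variable is y. *)
Notation bipoly := {poly {poly int}}.

Definition norm1 (h : {poly int}) : nat :=
  \max_(i < size h) absz (h`_i)%R.

Definition norm2 (P : bipoly) : nat :=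
  \max_(i < size P) norm1 (P`_i)%R.

Definition degx (P : bipoly) : nat := (size P).-1.
Definition degy (P : bipoly) : nat := \max_(i < size P) (size (P`_i)%R).-1.

Definition Res_x (P f : bipoly) : {poly int} := resultant P f.
Definition Res_y (g h : {poly int}) : int := resultant g h.

Definition int2R (z : int) : R :=
  match z with
  | Posz n => INR n
  | Negz n => Ropp (INR n.+1)
  end.
Delimit Scope R_scope with Re.

From HB Require Import structures.
From Stdlib Require Import Reals Lra.
From mathcomp Require Import all_boot all_order all_algebra.
From mathcomp Require Import perm zify.
Set Implicit Arguments.
Unset Strict Implicit.
Unset Printing Implicit Defensive.

Import Order.TTheory GRing.Theory Num.Theory.
Local Open Scope ring_scope.

(** The Leibniz expansion bounds the determinant of a [k x k] matrix, hence a
    Sylvester resultant, by [k!] times the product of the row bounds, for any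
    subadditive and submultiplicative size function [nu].  It is used three
    times: with the l1-norm of [Z[y]] to bound the coefficients of
    [g = Res_x P f], with [a |-> 2 ^ deg a] to bound [deg g], and with the
    absolute value of [Z] to bound [Res_y g h].  Everything except
    [norm2 P ^ (deg_x f * n1)] and [norm2 f ^ (n1 * m)] then depends only on
    [n1], [m], [deg_x f] and [norm1 h], and the hypothesis on [norm2 P]
    turns [norm2 P ^ (deg_x f * n1)] into a constant times
    [Q ^ ((1 - d/n) deg_x f / (m + 1))]. *)

Record submul_norm (R : comNzRingType) (nu : R -> int) : Prop := SubmulNorm {
  submul_norm_ge0 : forall x, 0 <= nu x;
  submul_norm0 : nu 0 = 0;
  submul_norm1 : nu 1 <= 1;
  submul_normN : forall x, nu (- x) = nu x;
  submul_normD : forall x y, nu (x + y) <= nu x + nu y;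
  submul_normM : forall x y, nu (x * y) <= nu x * nu y }.

Section SubmulNorm.
Variables (R : comNzRingType) (nu : R -> int).
Hypothesis nuP : submul_norm nu.

Lemma submul_norm_sum (I : Type) (r : seq I) (P : pred I) (F : I -> R) :
  nu (\sum_(i <- r | P i) F i) <= \sum_(i <- r | P i) nu (F i).
Proof.
elim/big_rec2: _ => [|i y x _ IH]; first by rewrite (submul_norm0 nuP).
by rewrite (le_trans (submul_normD nuP _ _)) // lerD2l.
Qed.

Lemma submul_norm_prod (I : Type) (r : seq I) (P : pred I) (F : I -> R) :
  nu (\prod_(i <- r | P i) F i) <= \prod_(i <- r | P i) nu (F i).
Proof.
elim/big_rec2: _ => [|i y x _ IH]; first exact: submul_norm1 nuP.
rewrite (le_trans (submul_normM nuP _ _)) //.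
by rewrite ler_wpM2l ?(submul_norm_ge0 nuP).
Qed.

Lemma submul_norm_det k (A : 'M[R]_k) (B : 'I_k -> int) :
  (forall i j, nu (A i j) <= B i) -> nu (\det A) <= k`!%:R * \prod_i B i.
Proof.
move=> leAB; apply: le_trans (submul_norm_sum _ _ _) _.
rewrite mulr_natl -card_Sn -sumr_const; apply: ler_sum => s _.
have -> : nu ((-1) ^+ s * \prod_i A i (s i)) = nu (\prod_i A i (s i)).
  by case: (odd_perm s); rewrite ?expr1 ?expr0 ?mul1r ?mulN1r ?(submul_normN nuP).
apply: le_trans (submul_norm_prod _ _ _) _.
by apply: ler_prod => i _; rewrite (submul_norm_ge0 nuP) leAB.
Qed.

Lemma submul_norm_resultant (p q : {poly R}) (Mp Mq : int) :
    (forall i, nu p`_i <= Mp) -> (forall i, nu q`_i <= Mq) ->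
  nu (resultant p q) <=
    ((size q).-1 + (size p).-1)`!%:R * (Mp ^+ (size q).-1 * Mq ^+ (size p).-1).
Proof.
move=> leMp leMq.
pose B (i : 'I_((size q).-1 + (size p).-1)) :=
  if split i is inl _ then Mp else Mq.
apply: le_trans (@submul_norm_det _ _ B _) _.
  have nu0 := submul_norm0 nuP; have nu_ge0 := submul_norm_ge0 nuP.
  move=> i j; rewrite Sylvester_mxE /B; case: split => k; case: leqP => _;
    by rewrite ?mulr1n ?mulr0n ?nu0 ?(le_trans (nu_ge0 _) (leMp 0%N))
               ?(le_trans (nu_ge0 _) (leMq 0%N)).
rewrite big_split_ord /=.
under eq_bigr do rewrite /B (unsplitK (inl _) : split (lshift _ _) = inl _).
rewrite prodr_const card_ord.
under eq_bigr do rewrite /B (unsplitK (inr _) : split (rshift _ _) = inr _).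
by rewrite prodr_const card_ord.
Qed.

End SubmulNorm.

Lemma submul_norm_abs : submul_norm (fun x : int => `|x|).
Proof.
split; [exact: normr_ge0 | exact: normr0 | by rewrite normr1 | exact: normrN
       | exact: ler_normD | by move=> x y; rewrite normrM].
Qed.

Definition L1 (a : {poly int}) : int := \sum_(i < size a) `|a`_i|.

Definition absp (a : {poly int}) : {poly int} := \poly_(i < size a) `|a`_i|.

Lemma coef_absp (a : {poly int}) i : (absp a)`_i = `|a`_i|.
Proof.
by rewrite coef_poly; case: ltnP => // le_a_i; rewrite nth_default ?normr0.
Qed.

Lemma L1_wide n (a : {poly int}) : (size a <= n)%N -> L1 a = \sum_(i < n) `|a`_i|.
Proof.
move=> le_a_n; rewrite /L1 (big_ord_widen n (fun i => `|a`_i|)) // big_mkcond /=.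
by apply: eq_bigr => i _; case: ltnP => // le_a_i; rewrite nth_default ?normr0.
Qed.

Lemma L1_horner_absp (a : {poly int}) : L1 a = (absp a).[1].
Proof.
rewrite (@horner_coef_wide _ (size a)) ?size_poly //.
by apply: eq_bigr => i _; rewrite coef_absp expr1n mulr1.
Qed.

Lemma L1_ge0 (a : {poly int}) : 0 <= L1 a.
Proof. exact: sumr_ge0. Qed.

Lemma ler_abs_coef_L1 (a : {poly int}) i : `|a`_i| <= L1 a.
Proof.
have [lt_i_a | le_a_i] := ltnP i (size a); last by rewrite nth_default ?L1_ge0.
by rewrite /L1 (bigD1 (Ordinal lt_i_a)) //= lerDl sumr_ge0.
Qed.

Lemma L1M (a b : {poly int}) : L1 (a * b) <= L1 a * L1 b.
Proof.
rewrite [L1 a]L1_horner_absp [L1 b]L1_horner_absp -hornerM.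
have le_ab := leq_maxl (size (a * b)) (size (absp a * absp b)).
have le_AB := leq_maxr (size (a * b)) (size (absp a * absp b)).
rewrite (horner_coef_wide 1 le_AB) (L1_wide le_ab).
apply: ler_sum => i _.
rewrite expr1n mulr1 !coefM (le_trans (ler_norm_sum _ _ _)) //.
by apply: ler_sum => j _; rewrite normrM !coef_absp.
Qed.

Lemma submul_norm_L1 : submul_norm L1.
Proof.
split; [exact: L1_ge0 | by rewrite /L1 size_poly0 big_ord0
       | by rewrite /L1 size_poly1 big_ord1 coefC | | | exact: L1M].
  by move=> a; rewrite /L1 size_polyN; apply: eq_bigr => i _; rewrite coefN normrN.
move=> a b; rewrite (L1_wide (size_polyD a b)).
rewrite (L1_wide (leq_maxl (size a) (size b))) (L1_wide (leq_maxr (size a) (size b))).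
by rewrite -big_split; apply: ler_sum => i _; rewrite coefD ler_normD.
Qed.

Definition exp2deg (a : {poly int}) : int := if a == 0 then 0 else (2 ^ (size a).-1)%N.

Lemma exp2degD (a b : {poly int}) : exp2deg (a + b) <= exp2deg a + exp2deg b.
Proof.
rewrite /exp2deg; have [-> | a0] := eqVneq a 0; first by rewrite add0r.
have [-> | b0] := eqVneq b 0; first by rewrite !addr0 (negPf a0).
case: eqP => // _; rewrite -PoszD lez_nat.
have le_deg : ((size (a + b)%R).-1 <= maxn (size a).-1 (size b).-1)%N.
  by have := size_polyD a b; lia.
apply: leq_trans (leq_pexp2l _ le_deg) _ => //.
by rewrite /maxn; case: ifP => _; rewrite ?leq_addl ?leq_addr.
Qed.

Lemma exp2degM (a b : {poly int}) : exp2deg (a * b) <= exp2deg a * exp2deg b.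
Proof.
rewrite /exp2deg; have [-> | a0] := eqVneq a 0; first by rewrite mul0r eqxx.
have [-> | b0] := eqVneq b 0; first by rewrite mulr0 eqxx.
case: eqP => // _; rewrite -PoszM lez_nat -expnD leq_pexp2l //.
by have := size_polyMleq a b; rewrite -!size_poly_gt0 in a0 b0; lia.
Qed.

Lemma submul_norm_exp2deg : submul_norm exp2deg.
Proof.
split=> [a | | | a | |]; rewrite /exp2deg ?eqxx ?oner_eq0 ?size_poly1 //.
- by rewrite oppr_eq0 size_polyN.
- exact: exp2degD.
- exact: exp2degM.
Qed.

Lemma deg_le_exp2deg (a : {poly int}) : ((size a).-1 <= absz (exp2deg a))%N.
Proof.
rewrite /exp2deg; case: eqP => [-> | _]; first by rewrite size_poly0.
exact/ltnW/ltn_expl.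
Qed.

Lemma size_coef_le_degy (P : bipoly) k i :
  (0 < k)%N -> (degy P <= k.-1)%N -> (size (P`_i)%R <= k)%N.
Proof.
move=> k_gt0 le_P_k; have [lt_i_P | le_P_i] := ltnP i (size P); last first.
  by rewrite nth_default ?size_poly0.
have := @leq_bigmax _ (fun j : 'I_(size P) => (size P`_j).-1) (Ordinal lt_i_P).
by rewrite -/(degy P) /=; lia.
Qed.

Lemma abs_coef_le_norm1 (c : {poly int}) j : (absz (c`_j)%R <= norm1 c)%N.
Proof.
have [lt_j_c | le_c_j] := ltnP j (size c); last by rewrite nth_default.
exact: (@leq_bigmax _ (fun j : 'I_(size c) => absz c`_j) (Ordinal lt_j_c)).
Qed.

Lemma norm1_coef_le_norm2 (P : bipoly) i : (norm1 (P`_i)%R <= norm2 P)%N.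
Proof.
have [lt_i_P | le_P_i] := ltnP i (size P).
  exact: (@leq_bigmax _ (fun j : 'I_(size P) => norm1 P`_j) (Ordinal lt_i_P)).
by rewrite nth_default // /norm1 size_poly0 big_ord0.
Qed.

Lemma norm2_monic_gt0 (f : bipoly) : f \is monic -> (0 < norm2 f)%N.
Proof.
move/monicP=> lead_f; apply: leq_trans (norm1_coef_le_norm2 f (size f).-1).
by rewrite [f`__]lead_f /norm1 size_poly1 big_ord1 coefC.
Qed.

Section BoundedBipoly.
Variables (n1 : nat) (P : bipoly).
Hypotheses (n1_gt0 : (0 < n1)%N) (degy_P : (degy P <= n1.-1)%N).

Lemma L1_coef_le i : L1 P`_i <= (n1 * norm2 P)%:R.
Proof.
rewrite (L1_wide (size_coef_le_degy i n1_gt0 degy_P)).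
apply: le_trans (_ : \sum_(j < n1) (norm2 P)%:R <= _).
  apply: ler_sum => j _; rewrite -abszE natz lez_nat.
  exact: leq_trans (abs_coef_le_norm1 _ _) (norm1_coef_le_norm2 _ _).
by rewrite sumr_const card_ord natrM mulr_natl.
Qed.

Lemma exp2deg_coef_le i : exp2deg P`_i <= (2 ^ n1.-1)%N%:R.
Proof.
rewrite /exp2deg natz; case: eqP => // _; rewrite lez_nat leq_pexp2l //.
by have := size_coef_le_degy i n1_gt0 degy_P; lia.
Qed.

End BoundedBipoly.

Lemma abs_Res_y_le (g h : {poly int}) :
  `|Res_y g h| <=
    ((size h).-1 + (size g).-1)`!%:R * (L1 g ^+ (size h).-1 * (norm1 h)%:R ^+ (size g).-1).
Proof.
have le_h i : `|h`_i| <= (norm1 h)%:R by rewrite -abszE natz lez_nat abs_coef_le_norm1.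
exact: (submul_norm_resultant submul_norm_abs (ler_abs_coef_L1 g) le_h).
Qed.

Definition degy_Res_x_max n1 m degf := ((degf + m)`! * 2 ^ (n1.-1 * (degf + m)))%N.

Definition Res_bound n1 m degf Hnorm :=
  let S := degy_Res_x_max n1 m degf in
  ((n1 + S)`! * ((degf + m)`! * n1 ^ (degf + m)) ^ n1 * Hnorm.+1 ^ S)%N.

Lemma leq_expn2r e m n : (m <= n)%N -> (m ^ e <= n ^ e)%N.
Proof. by case: e => // e; rewrite leq_exp2r. Qed.

Section ResultantBounds.
Variables (n1 : nat) (P f : bipoly).
Hypotheses (n1_gt0 : (0 < n1)%N) (degy_P : (degy P <= n1.-1)%N) (degy_f : (degy f <= n1.-1)%N).

Lemma L1_Res_x_le : L1 (Res_x P f) <=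
  (degx f + degx P)`!%:R * ((n1 * norm2 P)%:R ^+ degx f * (n1 * norm2 f)%:R ^+ degx P).
Proof.
exact: (submul_norm_resultant submul_norm_L1
  (L1_coef_le n1_gt0 degy_P) (L1_coef_le n1_gt0 degy_f)).
Qed.

Lemma degy_Res_x_le :
  ((size (Res_x P f)).-1 <= (degx f + degx P)`! * 2 ^ (n1.-1 * (degx f + degx P)))%N.
Proof.
apply: leq_trans (deg_le_exp2deg _) _.
have := submul_norm_resultant submul_norm_exp2deg
  (exp2deg_coef_le n1_gt0 degy_P) (exp2deg_coef_le n1_gt0 degy_f).
rewrite -!natrX -!natrM natz -expnD -expnM => le_exp2deg.
by rewrite -lez_nat abszE ger0_norm ?(submul_norm_ge0 submul_norm_exp2deg).
Qed.

Variables (m : nat) (h : {poly int}).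
Hypotheses (degx_P : (degx P <= m)%N) (f_monic : f \is monic) (size_h : size h = n1.+1).

Lemma L1_Res_x_le_nat : (absz (L1 (Res_x P f)) <=
  (degx f + m)`! * n1 ^ (degx f + m) * norm2 P ^ degx f * norm2 f ^ m)%N.
Proof.
have := L1_Res_x_le; rewrite -!natrX -!natrM natz => le_L1.
rewrite -lez_nat abszE ger0_norm ?L1_ge0 //; apply: le_trans le_L1 _; rewrite lez_nat.
have nf_gt0 : (0 < n1 * norm2 f)%N by rewrite muln_gt0 n1_gt0 norm2_monic_gt0.
apply: leq_trans (_ : _ <= (degx f + m)`! * ((n1 * norm2 P) ^ degx f * (n1 * norm2 f) ^ m))%N _.
  by rewrite leq_mul ?leq_fact ?leq_add2l // leq_mul // leq_pexp2l.
by apply: eq_leq; rewrite !expnMn expnD; lia.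
Qed.

Lemma degy_Res_x_le_max : ((size (Res_x P f)).-1 <= degy_Res_x_max n1 m (degx f))%N.
Proof.
apply: leq_trans degy_Res_x_le _.
by rewrite leq_mul ?leq_fact ?leq_add2l // leq_pexp2l // leq_mul2l leq_add2l degx_P orbT.
Qed.

Lemma abs_Res_y_Res_x_le : (absz (Res_y (Res_x P f) h) <=
  Res_bound n1 m (degx f) (norm1 h) * norm2 P ^ (degx f * n1) * norm2 f ^ (n1 * m))%N.
Proof.
set g := Res_x P f; set S := degy_Res_x_max n1 m (degx f).
have := abs_Res_y_le g h; rewrite size_h /=.
have [l L1g] : exists l : nat, L1 g = l%:R by exists (absz (L1 g)); rewrite natz abszE ger0_norm ?L1_ge0.
rewrite L1g -!natrX -!natrM natz => le_Res.
rewrite -lez_nat abszE (le_trans le_Res) // lez_nat.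
apply: leq_trans (_ : _ <= (n1 + S)`! * ((degx f + m)`! * n1 ^ (degx f + m)
        * norm2 P ^ degx f * norm2 f ^ m) ^ n1 * (norm1 h).+1 ^ S)%N _.
  have le_l : (l <= (degx f + m)`! * n1 ^ (degx f + m) * norm2 P ^ degx f * norm2 f ^ m)%N.
    by have := L1_Res_x_le_nat; rewrite -/g L1g natz.
  have := degy_Res_x_le_max; rewrite -/g -/S => le_deg.
  rewrite -mulnA leq_mul ?leq_fact ?leq_add2l // leq_mul ?leq_expn2r //.
  exact: leq_trans (leq_expn2r _ (leqnSn _)) (leq_pexp2l _ le_deg).
by apply: eq_leq; rewrite /Res_bound -/S !expnMn -!expnM [(m * n1)%N]mulnC; lia.
Qed.

End ResultantBounds.

Local Open Scope R_scope.

Lemma Rabs_int2R z : Rabs (int2R z) = INR (absz z).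
Proof.
by case: z => n; rewrite /int2R ?Rabs_Ropp Rabs_pos_eq //; apply: pos_INR.
Qed.

Lemma INR_muln a b : INR (a * b)%N = INR a * INR b.
Proof. exact: mult_INR. Qed.

Lemma INR_expn a e : INR (a ^ e)%N = INR a ^ e.
Proof. by elim: e => // e IH; rewrite expnS INR_muln IH. Qed.

Lemma Rpower_INR_expn (p e : nat) (y : R) :
  (0 < p)%N -> Rpower (INR (p ^ e)%N) y = Rpower (INR p) (INR e * y).
Proof.
move=> p_gt0; rewrite INR_expn -Rpower_pow ?Rpower_mult //.
by apply: lt_0_INR; lia.
Qed.

Lemma pow_le_Rpower_mul (x c1 c2 a b : R) k :
  0 <= x -> x <= Rpower c1 a * Rpower c2 b ->
  x ^ k <= Rpower c1 (a * INR k) * Rpower c2 (b * INR k).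
Proof.
move=> x_ge0 le_x; rewrite -!Rpower_mult !Rpower_pow; try exact: exp_pos.
by rewrite -Rpow_mult_distr; apply: pow_incr.
Qed.

Lemma Rpower_Q_exponent (p n1 n2 m d degf : nat) :
  (0 < p)%N -> (0 < n1)%N -> (0 < n2)%N ->
  Rpower (INR p) ((INR (n1 * n2) - INR d) / INR (n1 * m.+1) * INR (degf * n1)) =
  Rpower (INR (p ^ (n1 * n2))) ((1 - INR d / INR (n1 * n2)) * INR degf / INR m.+1).
Proof.
move=> p_gt0 /ssrnat.ltP/lt_0_INR n1_gt0 /ssrnat.ltP/lt_0_INR n2_gt0.
rewrite Rpower_INR_expn //; congr Rpower.
have m_ge0 := pos_INR m.
by rewrite !INR_muln S_INR; field; lra.
Qed.

Theorem mainTheorem4 :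
  forall (n1 m degf Hnorm : nat),
  exists K : R, (0 < K)%Re /\
  forall (p n2 d : nat) (h : {poly int}) (f : {poly {poly int}}),
    prime p ->
    let n := (n1 * n2)%N in
    (d %| n)%N -> (1 < d)%N -> (d < n)%N ->
    let Q := (p ^ n)%N in
    let N := (n1 * m.+1)%N in
    h \is monic -> size h = n1.+1 -> norm1 h = Hnorm ->
    f \is monic -> degx f = degf -> (degy f <= n1.-1)%N ->
    forall P : {poly {poly int}},
      (degx P <= m)%N -> (degy P <= n1.-1)%N ->
      (INR (norm2 P) <=
         Rpower 2 ((INR N - 1) / 4) * Rpower (INR p) ((INR n - INR d) / INR N))%Re ->
      (Rabs (int2R (Res_y (Res_x P f) h)) <=
         K * Rpower (INR Q) ((1 - INR d / INR n) * INR degf / INR m.+1)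
           * INR (norm2 f) ^ (n1 * m))%Re.
Proof.
move=> n1 m degf Hnorm.
set C := Res_bound n1 m degf Hnorm; set a := (INR (n1 * m.+1) - 1) / 4.
exists (INR C.+1 * Rpower 2 (a * INR (degf * n1))); split.
  by apply: Rmult_lt_0_compat; [apply: lt_0_INR; lia | apply: exp_pos].
move=> p n2 d h f p_prime n _ _ d_lt_n Q N _ size_h norm_h f_monic degx_f degy_f.
move=> P degx_P degy_P norm_P.
have n1_gt0 : (0 < n1)%N by move: d_lt_n; rewrite /n; case: (n1).
have n2_gt0 : (0 < n2)%N by move: d_lt_n; rewrite /n; case: (n2) => //; rewrite muln0.
have le_Res := abs_Res_y_Res_x_le n1_gt0 degy_P degy_f degx_P f_monic size_h.
rewrite degx_f norm_h -/C in le_Res; clearbody C.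
move/ssrnat.leP/le_INR: le_Res => le_Res.
rewrite !INR_muln !INR_expn -Rabs_int2R in le_Res.
rewrite -/a in norm_P.
have := pow_le_Rpower_mul (degf * n1)%N (pos_INR _) norm_P.
rewrite (Rpower_Q_exponent m d degf (prime_gt0 p_prime) n1_gt0 n2_gt0) => le_norm_P.
apply: Rle_trans le_Res _.
apply: Rmult_le_compat_r; first by apply: pow_le; apply: pos_INR.
rewrite Rmult_assoc; apply: Rmult_le_compat; last exact: le_norm_P.
- exact: pos_INR.
- by apply: pow_le; apply: pos_INR.
- by apply: le_INR; apply/ssrnat.leP.
Qed.
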